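(* Let $P$ be a projection algebra, let $p,q\in P$, and put $p'=q\delta_p$ and $q'=p\theta_q$. Then: (i) $p'\le p$, $q'\le q$ and $p'\,\mathscr F\,q'$; (ii) $\theta_p\theta_q=\theta_{p'}\theta_{q'}$ and $\delta_q\delta_p=\delta_{q'}\delta_{p'}$; (iii) if $p\le r\,\mathscr F\,q$ for some $r\in P$, then $p'=p$; (iv) if $p\,\mathscr F\,s\ge q$ for some $s\in P$, then $q'=q$.
   Context: Maps are written to the right of their arguments and composed left to right ($p\,\alpha\beta=(p\alpha)\beta$). A projection algebra is a set $P$ with maps $\theta_p,\delta_p:P\to P$ ($p\in P$) such that for all $p,q\in P$: $p\theta_p=p$, $p\delta_p=p$; $p\theta_{q\theta_p}=q\theta_p$, $p\delta_{q\delta_p}=q\delta_p$; $\theta_q\theta_{q\theta_p}=\theta_q\theta_p$, $\delta_q\delta_{q\delta_p}=\delta_q\delta_p$; $\theta_p\delta_p=\theta_p$, $\delta_p\theta_p=\delta_p$; $\theta_{p\delta_q}\theta_p=\theta_q\theta_p$, $\delta_{p\theta_q}\delta_p=\delta_q\delta_p$. The partial order is $p\le q\iff p=p\theta_q$ (equivalently $p=p\delta_q$), and $p\,\mathscr F\,q$ means $p=q\delta_p$ and $q=p\theta_q$. *)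

(* Maps act on the right: "x theta_p" is written [theta P p x],
   and the composite map "theta_p theta_q" sends x to (x theta_p) theta_q,
   i.e. [theta P q (theta P p x)].  Equalities of maps are stated pointwise. *)

Record ProjAlg := {
  carrier :> Type;
  theta : carrier -> carrier -> carrier;
  delta : carrier -> carrier -> carrier;
  ax_theta_id : forall p, theta p p = p;
  ax_delta_id : forall p, delta p p = p;
  ax_theta2 : forall p q, theta (theta p q) p = theta p q;
  ax_delta2 : forall p q, delta (delta p q) p = delta p q;
  ax_theta3 : forall p q x, theta (theta p q) (theta q x) = theta p (theta q x);
  ax_delta3 : forall p q x, delta (delta p q) (delta q x) = delta p (delta q x);
  ax_td : forall p x, delta p (theta p x) = theta p x;
  ax_dt : forall p x, theta p (delta p x) = delta p x;
  ax_theta4 : forall p q x, theta p (theta (delta q p) x) = theta p (theta q x);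
  ax_delta4 : forall p q x, delta p (delta (theta q p) x) = delta p (delta q x)
}.

Arguments theta {_} _ _.
Arguments delta {_} _ _.

Definition pa_le {P : ProjAlg} (p q : P) : Prop := p = theta q p.

Definition pa_F {P : ProjAlg} (p q : P) : Prop := p = delta p q /\ q = theta q p.

(* The axioms are invariant under exchanging theta and delta, so each statement
   about delta has a theta twin proved in the dual algebra.  Everything about
   p' = q delta_p and q' = p theta_q rests on q' delta_p = p', which follows
   from q' <= q and the last axiom: it makes p' a fixed point of delta_{q'}
   and turns delta_q delta_p into delta_{q'} delta_{p'}.  For (iii), p <= r
   gives q delta_p = (q delta_r) delta_p = r delta_p = p. *)
From Stdlib Require Import Setoid.

Definition dual (P : ProjAlg) : ProjAlg :=
  Build_ProjAlg P (@delta P) (@theta P) (ax_delta_id P) (ax_theta_id P)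
    (ax_delta2 P) (ax_theta2 P) (ax_delta3 P) (ax_theta3 P)
    (ax_dt P) (ax_td P) (ax_delta4 P) (ax_theta4 P).

Section Order.
Context {P : ProjAlg}.
Implicit Types a b x : P.

Lemma theta_idem a x : theta a (theta a x) = theta a x.
Proof. rewrite <- (ax_td P a x) at 1. rewrite ax_dt. apply ax_td. Qed.

Lemma pa_le_delta a b : pa_le a b <-> a = delta b a.
Proof.
  unfold pa_le; split; intro H; rewrite H at 2.
  - rewrite ax_td. exact H.
  - rewrite ax_dt. exact H.
Qed.

Lemma theta_le_self a b : pa_le a b -> theta a b = a.
Proof. unfold pa_le. intro H. rewrite H at 1. rewrite ax_theta2. now symmetry. Qed.

Lemma theta_theta_le a b x : pa_le a b -> theta a (theta b x) = theta a x.
Proof.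
  intro H. apply pa_le_delta in H.
  rewrite <- (ax_theta4 P a b x), <- H. apply theta_idem.
Qed.

End Order.

Lemma pa_le_dual {P : ProjAlg} (a b : P) : @pa_le (dual P) a b <-> pa_le a b.
Proof. symmetry. exact (pa_le_delta a b). Qed.

Lemma delta_le_self {P : ProjAlg} (a b : P) : pa_le a b -> delta a b = a.
Proof. intro H. apply (theta_le_self (P := dual P)). now apply pa_le_dual. Qed.

Lemma delta_delta_le {P : ProjAlg} (a b x : P) :
  pa_le a b -> delta a (delta b x) = delta a x.
Proof. intro H. apply (theta_theta_le (P := dual P)). now apply pa_le_dual. Qed.

Section Projections.
Context {P : ProjAlg}.
Implicit Types p q r x : P.

Lemma delta_le p q : pa_le (delta p q) p.
Proof. symmetry. apply ax_dt. Qed.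

Lemma theta_le p q : pa_le (theta q p) q.
Proof. symmetry. apply theta_idem. Qed.

Lemma delta_theta_delta p q : delta p (theta q p) = delta p q.
Proof.
  rewrite <- (delta_le_self _ _ (theta_le p q)) at 1.
  rewrite (ax_delta4 P p q q), ax_delta_id. reflexivity.
Qed.

Lemma delta_delta_theta p q : delta (delta p q) (theta q p) = delta p q.
Proof.
  rewrite <- (ax_td P q p).
  rewrite (ax_delta3 P p q), ax_td. apply delta_theta_delta.
Qed.

Lemma delta_comp_proj p q x :
  delta p (delta q x) = delta (delta p q) (delta (theta q p) x).
Proof.
  rewrite <- (ax_delta4 P p q x), <- (ax_delta3 P p (theta q p) x).
  rewrite delta_theta_delta. reflexivity.
Qed.

Lemma delta_le_eq p q r : pa_le p r -> r = delta r q -> delta p q = p.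
Proof.
  intros Hpr Hr. rewrite <- (delta_delta_le _ _ q Hpr), <- Hr.
  now apply delta_le_self.
Qed.

End Projections.

Lemma theta_theta_delta {P : ProjAlg} (p q : P) :
  theta (theta q p) (delta p q) = theta q p.
Proof. exact (delta_delta_theta (P := dual P) q p). Qed.

Lemma theta_comp_proj {P : ProjAlg} (p q x : P) :
  theta q (theta p x) = theta (theta q p) (theta (delta p q) x).
Proof. exact (delta_comp_proj (P := dual P) q p x). Qed.

Lemma theta_le_eq {P : ProjAlg} (p q s : P) :
  pa_le q s -> s = theta s p -> theta q p = q.
Proof. intro H. apply (delta_le_eq (P := dual P)). now apply pa_le_dual. Qed.

Lemma pa_F_proj {P : ProjAlg} (p q : P) : pa_F (delta p q) (theta q p).
Proof.
  split; symmetry; [apply delta_delta_theta | apply theta_theta_delta].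
Qed.

Theorem lemma4p12 (P : ProjAlg) (p q : P) :
  let p' := delta p q in   (* p' = q delta_p *)
  let q' := theta q p in   (* q' = p theta_q *)
  (pa_le p' p /\ pa_le q' q /\ pa_F p' q') /\
  ((forall x : P, theta q (theta p x) = theta q' (theta p' x)) /\
   (forall x : P, delta p (delta q x) = delta p' (delta q' x))) /\
  (forall r : P, pa_le p r -> pa_F r q -> p' = p) /\
  (forall s : P, pa_F p s -> pa_le q s -> q' = q).
Proof.
  intros p' q'.
  split; [| split; [| split]].
  - split; [apply delta_le | split; [apply theta_le | apply pa_F_proj]].
  - split; intro x; [apply theta_comp_proj | apply delta_comp_proj].
  - intros r Hpr [Hr _]. exact (delta_le_eq p q r Hpr Hr).
  - intros s [_ Hs] Hqs. exact (theta_le_eq p q s Hqs Hs).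
Qed.
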